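(* Let $N\in\mathbb{N}$. Consider parameters $(D,b_1,\dots,b_N,r_1,\dots,r_N)$ with $D>0$, $b_i>0$ for $1\le i\le N$, and $0<r_1<r_2<\cdots<r_N$ (no relation between $D$ and $h:=\sum_{i=1}^N b_i/r_i$ is assumed; $D>h$, $D=h$ and $D<h$ are all allowed). For $k\in\mathbb{N}$ define the polynomial $$P_N^k(\lambda)=\Big(D+\frac{\lambda^2}{(2k-1)^2}\Big)\prod_{j=1}^N(\lambda+r_j)-\sum_{i=1}^N b_i\prod_{\substack{1\le j\le N\\ j\neq i}}(\lambda+r_j),$$ a polynomial of degree $N+2$ in $\lambda$, and call the multiset of its $N+2$ complex roots (counted with multiplicity) the cluster of eigenvalues associated with $k$. Let $k_1,k_2\in\mathbb{N}$ with $k_1<k_2$. Then the parameters $D, b_1,\dots,b_N, r_1,\dots,r_N$ are uniquely determined by (and can be recovered from) the two clusters of eigenvalues associated with $k=k_1$ and $k=k_2$; that is, if two admissible parameter tuples yield the same clusters for $k_1$ and for $k_2$, then the tuples coincide.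
   Context: This arises from the extended Burgers model $\partial_t^2u=D\,\partial_x^2u-\sum_{i=1}^N b_i\int_0^t e^{-r_i(t-\tau)}\partial_x^2u(\tau,x)\,d\tau$ on $(0,\pi/2)$ with $u(t,0)=0$, $\partial_xu(t,\pi/2)=0$; replacing $\partial_x^2$ by its eigenvalue $-(2k-1)^2$ (eigenfunction $\sin(2k-1)x$) in the first-order augmented system for $(u,\partial_tu,w_1,\dots,w_N)$ gives an $(N+2)\times(N+2)$ matrix whose eigenvalues (''clustered eigenvalues'') are exactly the roots of $P_N^k$ as defined in the claim. *)

From HB Require Import structures.
From mathcomp Require Import all_boot all_order all_algebra.
From mathcomp Require Import complex.
Set Implicit Arguments. Unset Strict Implicit. Unset Printing Implicit Defensive.
Import Order.TTheory GRing.Theory Num.Theory.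
Local Open Scope ring_scope.

Definition PNk (R : rcfType) (N k : nat) (D : R) (b r : 'I_N -> R) : {poly R} :=
  (D%:P + ((2 * k%:R - 1) ^+ 2)^-1 *: 'X^2) * \prod_(j < N) ('X + (r j)%:P)
  - \sum_(i < N) (b i)%:P * \prod_(j < N | j != i) ('X + (r j)%:P).

Definition PNkC (R : rcfType) (N k : nat) (D : R) (b r : 'I_N -> R) : {poly R[i]} :=
  map_poly (fun x : R => (x%:C)%C) (PNk k D b r).

(* The cluster of eigenvalues associated with k: the multiset of complex roots
   of P_N^k, represented by its multiplicity function z |-> mup z P. *)
Definition cluster (R : rcfType) (N k : nat) (D : R) (b r : 'I_N -> R) : R[i] -> nat :=
  fun z => mup z (PNkC k D b r).

Definition admissible (R : rcfType) (N : nat) (D : R) (b r : 'I_N -> R) : Prop :=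
  0 < D /\ (forall i, 0 < b i) /\ (forall i, 0 < r i) /\
  (forall i j : 'I_N, (i < j)%N -> r i < r j).

From mathcomp Require Import all_boot all_order all_algebra.
From mathcomp Require Import complex.
From mathcomp Require Import ring zify.
Set Implicit Arguments. Unset Strict Implicit. Unset Printing Implicit Defensive.
Import Order.TTheory GRing.Theory Num.Theory.
Local Open Scope ring_scope.

(** Since the leading coefficient c_k = 1/(2k-1)^2 of P_N^k is known, a cluster
   determines P_N^k itself.  Write P_N^k = (D + c_k X^2) Q - S with
   Q = prod_j (X + r_j) and deg S < N.  The difference of the polynomials for
   k1 and k2 is the nonzero multiple (c_k1 - c_k2) X^2 Q, which gives Q and
   hence the increasing family r.  Euclidean division by Q then returns
   D + c_k X^2 as quotient and -S as remainder, and evaluating S at -r_i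
   isolates b_i, since S(-r_i) = b_i prod_(j != i) (r_j - r_i). *)

Lemma eq_poly_mup (F : closedFieldType) (p q : {poly F}) :
  p != 0 -> lead_coef p = lead_coef q -> (forall z, mup z p = mup z q) -> p = q.
Proof.
move=> p_neq0 lead_pq mup_pq.
have [s p_eq] := closed_field_poly_normal p.
have [t q_eq] := closed_field_poly_normal q.
have lead_neq0 : lead_coef p != 0 by rewrite lead_coef_eq0.
have mup_normal z (u : seq F) :
    mup z (lead_coef p *: \prod_(x <- u) ('X - x%:P)) = count_mem z u.
  by rewrite -mul_polyC mupMr ?mu_prod_XsubC // rootC.
rewrite p_eq q_eq -lead_pq; congr (_ *: _); apply: perm_big.
by apply/allP => z _ /=; apply/eqP; rewrite -!mup_normal -p_eq lead_pq -q_eq.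
Qed.

Lemma lt_sorted_codom (d : Order.disp_t) (T : orderType d) (N : nat) (f : 'I_N -> T) :
  {homo f : i j / (i < j)%N >-> (i < j)%O} -> sorted <%O (codom f).
Proof.
move=> f_incr; rewrite codomE sorted_map.
have : sorted ltn (map val (enum 'I_N)) by rewrite val_enum_ord iota_ltn_sorted.
by rewrite sorted_map; apply: sub_sorted => i j /f_incr.
Qed.

Section KernelTransform.
Variables (R : idomainType) (N : nat).
Implicit Types (b r : 'I_N -> R).

(* [num_poly b r / den_poly r] is sum_i b_i / (X + r_i), the Laplace transform
   of the memory kernel sum_i b_i e^(-r_i t). *)
Definition den_poly r : {poly R} := \prod_(j < N) ('X + (r j)%:P).

Definition num_poly b r : {poly R} :=
  \sum_(i < N) (b i)%:P * \prod_(j < N | j != i) ('X + (r j)%:P).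

Lemma monic_den_poly r : den_poly r \is monic.
Proof. by apply: monic_prod => j _; apply: monicXaddC. Qed.

Lemma size_den_poly r : size (den_poly r) = N.+1.
Proof.
rewrite /den_poly (eq_bigr (fun j => 'X - (- r j)%:P)); last first.
  by move=> j _; rewrite polyCN opprK.
by rewrite -big_enum size_prod_XsubC -cardE card_ord.
Qed.

Lemma size_num_poly b r : (size (num_poly b r) <= N)%N.
Proof.
apply: (big_ind (fun p : {poly R} => (size p <= N)%N)) => [|p q|i _].
- by rewrite size_poly0.
- by move=> p_small q_small; rewrite (leq_trans (size_polyD _ _)) // geq_max p_small.
have den_split : den_poly r = ('X + (r i)%:P) * \prod_(j < N | j != i) ('X + (r j)%:P).
  by rewrite /den_poly (bigD1 i).
have monic_cofactor : \prod_(j < N | j != i) ('X + (r j)%:P) \is monic.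
  by apply: monic_prod => j _; apply: monicXaddC.
move: (size_den_poly r); rewrite den_split size_Mmonic ?monic_cofactor //;
  last by rewrite monic_neq0 ?monicXaddC.
rewrite size_XaddC add2n => -[size_cofactor].
by rewrite mul_polyC (leq_trans (size_scale_leq _ _)) ?size_cofactor.
Qed.

Lemma horner_num_poly b r i :
  (num_poly b r).[- r i] = b i * \prod_(j < N | j != i) (r j - r i).
Proof.
rewrite /num_poly horner_sum (bigD1 i) //= [X in _ + X]big1 ?addr0 => [|i' i'_neq_i].
  rewrite hornerM hornerC horner_prod; congr (_ * _).
  by apply: eq_bigr => j _; rewrite hornerD hornerX hornerC addrC.
rewrite hornerM horner_prod (bigD1 i) 1?eq_sym //=.
by rewrite hornerD hornerX !hornerC addNr mul0r mulr0.
Qed.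

Lemma root_den_poly r x : root (den_poly r) (- x) = (x \in codom r).
Proof.
rewrite /root /den_poly horner_prod prodf_seq_eq0.
apply/hasP/codomP => [[j _ /=] | [j ->]].
  by rewrite hornerD hornerX hornerC addrC subr_eq0 => /eqP <-; exists j.
by exists j; rewrite ?mem_index_enum //= hornerD hornerX hornerC addNr.
Qed.

Lemma eq_num_poly b r r' : r =1 r' -> num_poly b r = num_poly b r'.
Proof.
move=> eq_r; apply: eq_bigr => i _; congr (_ * _).
by apply: eq_bigr => j _; rewrite eq_r.
Qed.

Lemma num_poly_inj b b' r :
  injective r -> num_poly b r = num_poly b' r -> b =1 b'.
Proof.
move=> r_inj eq_num i; apply: (mulIf (x := \prod_(j < N | j != i) (r j - r i))).
  by apply/prodf_neq0 => j j_neq_i; rewrite subr_eq0 (inj_eq r_inj).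
by rewrite -!horner_num_poly eq_num.
Qed.

End KernelTransform.

Lemma den_poly_inj (R : realDomainType) (N : nat) (r r' : 'I_N -> R) :
  {homo r : i j / (i < j)%N >-> i < j} -> {homo r' : i j / (i < j)%N >-> i < j} ->
  den_poly r = den_poly r' -> r =1 r'.
Proof.
move=> r_incr r'_incr eq_den.
have eq_codom : codom r = codom r'.
  by apply: lt_sorted_eq; rewrite ?lt_sorted_codom // => x; rewrite -!root_den_poly eq_den.
by move: eq_codom; rewrite !codomE => /eq_in_map eq_r i; apply: eq_r; rewrite mem_enum.
Qed.

Definition odd_sq_inv (R : numFieldType) (k : nat) : R := ((2 * k%:R - 1) ^+ 2)^-1.

Lemma odd_sq_invE (R : numFieldType) k :
  (0 < k)%N -> odd_sq_inv R k = ((2 * k - 1) ^ 2)%N%:R^-1.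
Proof. by move=> k_gt0; rewrite /odd_sq_inv natrX natrB ?natrM //; lia. Qed.

Lemma odd_sq_inv_neq0 (R : numFieldType) k : (0 < k)%N -> odd_sq_inv R k != 0.
Proof. by move=> k_gt0; rewrite odd_sq_invE // invr_eq0 pnatr_eq0; lia. Qed.

Lemma odd_sq_inv_inj (R : numFieldType) k1 k2 : (0 < k1)%N -> (0 < k2)%N ->
  odd_sq_inv R k1 = odd_sq_inv R k2 -> k1 = k2.
Proof.
move=> k1_gt0 k2_gt0; rewrite !odd_sq_invE // => /invr_inj /eqP.
by rewrite eqr_nat => /eqP; rewrite -!/(_ ^ 2)%N; nia.
Qed.

Definition quad_poly (R : numFieldType) (k : nat) (D : R) : {poly R} :=
  D%:P + odd_sq_inv R k *: 'X^2.

Lemma quad_poly_inj (R : numFieldType) k : injective (@quad_poly R k).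
Proof.
move=> D D' /(congr1 (coefp 0)) /=.
by rewrite !coefD !coefC !coefZ coefXn !mulr0 !addr0.
Qed.

Lemma size_quad_poly (R : numFieldType) k D :
  (0 < k)%N -> size (@quad_poly R k D) = 3%N.
Proof.
move=> k_gt0; have size_X2 : size (odd_sq_inv R k *: 'X^2 : {poly R}) = 3%N.
  by rewrite size_scale ?odd_sq_inv_neq0 // size_polyXn.
by rewrite /quad_poly addrC size_polyDl size_X2 // (leq_ltn_trans (size_polyC_leq1 _)).
Qed.

Lemma lead_coef_quad_poly (R : numFieldType) k D :
  (0 < k)%N -> lead_coef (@quad_poly R k D) = odd_sq_inv R k.
Proof.
move=> k_gt0; rewrite /quad_poly lead_coefDr ?lead_coefZ ?lead_coefXn ?mulr1 //.
by rewrite size_scale ?odd_sq_inv_neq0 // size_polyXn (leq_ltn_trans (size_polyC_leq1 _)).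
Qed.

Section ClusterPolynomial.
Variables (R : rcfType) (N : nat).
Implicit Types (D : R) (b r : 'I_N -> R).

Lemma PNkE k D b r : PNk k D b r = quad_poly k D * den_poly r - num_poly b r.
Proof. by []. Qed.

Lemma size_num_lt_den b r : (size (- num_poly b r) < size (den_poly r))%N.
Proof. by rewrite size_polyN size_den_poly ltnS size_num_poly. Qed.

Lemma divp_PNk k D b r : PNk k D b r %/ den_poly r = quad_poly k D.
Proof. by rewrite PNkE divp_addl_mul_small ?size_num_lt_den. Qed.

Lemma modp_PNk k D b r : PNk k D b r %% den_poly r = - num_poly b r.
Proof. by rewrite PNkE modp_addl_mul_small ?size_num_lt_den. Qed.

Lemma lead_coef_PNk k D b r : (0 < k)%N -> lead_coef (PNk k D b r) = odd_sq_inv R k.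
Proof.
move=> k_gt0; have quad_neq0 : quad_poly k D != 0.
  by rewrite -size_poly_eq0 size_quad_poly.
rewrite PNkE lead_coefDl ?lead_coef_Mmonic ?monic_den_poly ?lead_coef_quad_poly //.
rewrite size_Mmonic ?monic_den_poly // (leq_trans (size_num_lt_den b r)) //.
rewrite size_quad_poly // size_den_poly; lia.
Qed.

Lemma PNkB k1 k2 D b r : PNk k1 D b r - PNk k2 D b r =
  (odd_sq_inv R k1 - odd_sq_inv R k2) *: 'X^2 * den_poly r.
Proof. by rewrite !PNkE /quad_poly -!mul_polyC polyCB; ring. Qed.

Lemma PNk_eq_of_cluster k D D' b r b' r' : (0 < k)%N ->
  cluster k D b r =1 cluster k D' b' r' -> PNk k D b r = PNk k D' b' r'.
Proof.
move=> k_gt0 eq_cluster; have complex_inj := @complexI R.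
apply: (map_inj_poly complex_inj) => //; apply: eq_poly_mup => [||z].
- by rewrite map_poly_eq0 -lead_coef_eq0 lead_coef_PNk // odd_sq_inv_neq0.
- by rewrite !lead_coef_map_inj // !lead_coef_PNk.
exact: eq_cluster.
Qed.

End ClusterPolynomial.

Theorem theorem2p1 (R : rcfType) (N : nat) (k1 k2 : nat)
  (D D' : R) (b r b' r' : 'I_N -> R) :
  (0 < k1)%N -> (k1 < k2)%N ->
  admissible D b r -> admissible D' b' r' ->
  cluster k1 D b r =1 cluster k1 D' b' r' ->
  cluster k2 D b r =1 cluster k2 D' b' r' ->
  D = D' /\ b =1 b' /\ r =1 r'.
Proof.
move=> k1_gt0 lt_k12 [_ [_ [_ r_incr]]] [_ [_ [_ r'_incr]]] cluster1 cluster2.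
have P1 := PNk_eq_of_cluster k1_gt0 cluster1.
have P2 := PNk_eq_of_cluster (ltn_trans k1_gt0 lt_k12) cluster2.
have X2_neq0 : (odd_sq_inv R k1 - odd_sq_inv R k2) *: 'X^2 != 0 :> {poly R}.
  rewrite scaler_eq0 negb_or subr_eq0 -size_poly_eq0 size_polyXn andbT.
  by apply/eqP => /odd_sq_inv_inj; lia.
have eq_den : den_poly r = den_poly r'.
  by apply: (mulfI X2_neq0); rewrite -(PNkB k1 k2 D b) -(PNkB k1 k2 D' b') P1 P2.
have eq_r := den_poly_inj r_incr r'_incr eq_den.
have eq_quad : quad_poly k1 D = quad_poly k1 D'.
  by rewrite -(divp_PNk k1 D b r) P1 eq_den divp_PNk.
have eq_num : num_poly b r = num_poly b' r.
  apply: oppr_inj; rewrite -(modp_PNk k1 D b r) P1 eq_den modp_PNk.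
  by rewrite (eq_num_poly b' eq_r).
have r_inj : injective r by apply/injectiveP/lt_sorted_uniq/lt_sorted_codom.
by split; [exact: quad_poly_inj eq_quad | split; [exact: num_poly_inj eq_num |]].
Qed.
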